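(* Let $(D,\prec,\succ,\alpha)$ be a Hom-dendriform algebra and $(V,\prec_l,\succ_l,\prec_r,\succ_r,\beta)$ a representation of it. On $D\oplus V$ define, for $x,y\in D$, $u,v\in V$: $(x,u)\prec_\vdash(y,v)=(x\prec y,\ x\prec_l v)$, $(x,u)\prec_\dashv(y,v)=(x\prec y,\ u\prec_r y)$, $(x,u)\succ_\vdash(y,v)=(x\succ y,\ x\succ_l v)$, $(x,u)\succ_\dashv(y,v)=(x\succ y,\ u\succ_r y)$, and the linear map $\alpha\otimes\beta:D\oplus V\to D\oplus V$, $(x,u)\mapsto(\alpha(x),\beta(u))$. Then $(D\oplus V,\prec_\vdash,\prec_\dashv,\succ_\vdash,\succ_\dashv,\alpha\otimes\beta)$ is a Hom-quadri-dendriform algebra (called the hemi-semidirect product Hom-quadri-dendriform algebra).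
   Context: All vector spaces are over a field of characteristic zero. A Hom-dendriform algebra is $(D,\prec,\succ,\alpha)$ with $\prec,\succ$ bilinear on $D$ and $\alpha:D\to D$ linear such that for all $x,y,z$: $\alpha(x)\prec(y\prec z+y\succ z)=(x\prec y)\prec\alpha(z)$; $\alpha(x)\succ(y\prec z)=(x\succ y)\prec\alpha(z)$; $\alpha(x)\succ(y\succ z)=(x\prec y+x\succ y)\succ\alpha(z)$. A representation of $(D,\prec,\succ,\alpha)$ is a vector space $V$ with a linear map $\beta:V\to V$ and bilinear maps $\prec_l,\succ_l:D\times V\to V$, $\prec_r,\succ_r:V\times D\to V$ such that for all $x,y\in D$, $m\in V$: $(x\prec y)\prec_l\beta(m)=\alpha(x)\prec_l(y\prec_l m+y\succ_l m)$; $(x\succ y)\prec_l\beta(m)=\alpha(x)\succ_l(y\prec_l m)$; $\alpha(x)\succ_l(y\succ_l m)=(x\prec y+x\succ y)\succ_l\beta(m)$; $\beta(m)\prec_r(x\prec y+x\succ y)=(m\prec_r x)\prec_r\alpha(y)$; $\beta(m)\succ_r(x\prec y)=(m\succ_r x)\prec_r\alpha(y)$; $(m\prec_r x+m\succ_r x)\succ_r\alpha(y)=\beta(m)\succ_r(x\succ y)$; $(x\prec_l m)\prec_r\alpha(y)=\alpha(x)\prec_l(m\prec_r y+m\succ_r y)$; $(x\succ_l m)\prec_r\alpha(y)=\alpha(x)\succ_l(m\prec_r y)$; $(x\prec_l m+x\succ_l m)\succ_r\alpha(y)=\alpha(x)\succ_l(m\succ_r y)$. A Hom-quadri-dendriform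 algebra is a tuple $(E,\prec_\vdash,\prec_\dashv,\succ_\vdash,\succ_\dashv,\gamma)$ with four bilinear operations on $E$ and $\gamma:E\to E$ linear such that for all $x,y,z\in E$: (Q1) $(x\prec_\vdash y)\prec_\vdash\gamma(z)=(x\prec_\dashv y)\prec_\vdash\gamma(z)=\gamma(x)\prec_\vdash(y\prec_\vdash z+y\succ_\vdash z)$; (Q2) $(x\succ_\vdash y)\prec_\vdash\gamma(z)=(x\succ_\dashv y)\prec_\vdash\gamma(z)=\gamma(x)\succ_\vdash(y\prec_\vdash z)$; (Q3) $\gamma(x)\succ_\vdash(y\succ_\vdash z)=(x\prec_\vdash y+x\succ_\vdash y)\succ_\vdash\gamma(z)=(x\prec_\dashv y+x\succ_\dashv y)\succ_\vdash\gamma(z)$; (Q4) $\gamma(x)\succ_\vdash(y\succ_\vdash z)=(x\prec_\dashv y+x\succ_\vdash y)\succ_\vdash\gamma(z)=(x\prec_\vdash y+x\succ_\dashv y)\succ_\vdash\gamma(z)$; (Q5) $(x\prec_\vdash y)\prec_\dashv\gamma(z)=\gamma(x)\prec_\vdash(y\prec_\dashv z+y\succ_\dashv z)$; (Q6) $(x\succ_\vdash y)\prec_\dashv\gamma(z)=\gamma(x)\succ_\vdash(y\prec_\dashv z)$; (Q7) $\gamma(x)\succ_\vdash(y\succ_\dashv z)=(x\prec_\vdash y+x\succ_\vdash y)\succ_\dashv\gamma(z)$; (Q8) $(x\prec_\dashv y)\prec_\dashv\gamma(z)=\gamma(x)\prec_\dashv(y\prec_\vdash z+y\succ_\vdash z)=\gamma(x)\prec_\dashv(y\prec_\dashv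 z+y\succ_\dashv z)$; (Q9) $(x\prec_\dashv y)\prec_\dashv\gamma(z)=\gamma(x)\prec_\dashv(y\prec_\vdash z+y\succ_\dashv z)=\gamma(x)\prec_\dashv(y\prec_\dashv z+y\succ_\vdash z)$; (Q10) $(x\succ_\dashv y)\prec_\dashv\gamma(z)=\gamma(x)\succ_\dashv(y\prec_\vdash z)=\gamma(x)\succ_\dashv(y\prec_\dashv z)$; (Q11) $\gamma(x)\succ_\dashv(y\succ_\vdash z)=\gamma(x)\succ_\dashv(y\succ_\dashv z)=(x\prec_\dashv y+x\succ_\dashv y)\succ_\dashv\gamma(z)$. *)

From HB Require Import structures.
From mathcomp Require Import all_boot all_order all_algebra.
Set Implicit Arguments. Unset Strict Implicit. Unset Printing Implicit Defensive.
Import GRing.Theory.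
Local Open Scope ring_scope.

Definition is_linear (K : fieldType) (U W : lmodType K) (f : U -> W) : Prop :=
  forall (a : K) (u v : U), f (a *: u + v) = a *: f u + f v.

Definition is_bilinear (K : fieldType) (U W Z : lmodType K) (f : U -> W -> Z) : Prop :=
  (forall w : W, is_linear (fun u => f u w)) /\ (forall u : U, is_linear (f u)).

Definition HomDendriform (K : fieldType) (D : lmodType K)
  (prec succ : D -> D -> D) (alpha : D -> D) : Prop :=
  [/\ is_bilinear prec, is_bilinear succ, is_linear alpha &
   forall x y z : D,
   [/\ prec (alpha x) (prec y z + succ y z) = prec (prec x y) (alpha z),
       succ (alpha x) (prec y z) = prec (succ x y) (alpha z) &
       succ (alpha x) (succ y z) = succ (prec x y + succ x y) (alpha z)]].

Definition HomDendriformRep (K : fieldType) (D V : lmodType K)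
  (prec succ : D -> D -> D) (alpha : D -> D)
  (precl succl : D -> V -> V) (precr succr : V -> D -> V) (beta : V -> V) : Prop :=
  [/\ is_linear beta, is_bilinear precl /\ is_bilinear succl,
      is_bilinear precr /\ is_bilinear succr &
   forall (x y : D) (m : V),
   (precl (prec x y) (beta m) = precl (alpha x) (precl y m + succl y m) /\
       precl (succ x y) (beta m) = succl (alpha x) (precl y m) /\
       succl (alpha x) (succl y m) = succl (prec x y + succ x y) (beta m) /\
       precr (beta m) (prec x y + succ x y) = precr (precr m x) (alpha y) /\
       succr (beta m) (prec x y) = precr (succr m x) (alpha y) /\
       succr (precr m x + succr m x) (alpha y) = succr (beta m) (succ x y) /\
       precr (precl x m) (alpha y) = precl (alpha x) (precr m y + succr m y) /\
       precr (succl x m) (alpha y) = succl (alpha x) (precr m y) /\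
       succr (precl x m + succl x m) (alpha y) = succl (alpha x) (succr m y))].

(* Hom-quadri-dendriform algebra (E, pv, pd, sv, sd, gamma), where
   pv = \prec_\vdash, pd = \prec_\dashv, sv = \succ_\vdash, sd = \succ_\dashv. *)
Definition HomQuadriDendriform (K : fieldType) (E : lmodType K)
  (pv pd sv sd : E -> E -> E) (gamma : E -> E) : Prop :=
  [/\ is_bilinear pv /\ is_bilinear pd, is_bilinear sv /\ is_bilinear sd,
      is_linear gamma &
   forall x y z : E,
   (
       pv (pv x y) (gamma z) = pv (pd x y) (gamma z) /\
       pv (pd x y) (gamma z) = pv (gamma x) (pv y z + sv y z) /\
       pv (sv x y) (gamma z) = pv (sd x y) (gamma z) /\
       pv (sd x y) (gamma z) = sv (gamma x) (pv y z) /\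
       sv (gamma x) (sv y z) = sv (pv x y + sv x y) (gamma z) /\
       sv (pv x y + sv x y) (gamma z) = sv (pd x y + sd x y) (gamma z) /\
       sv (gamma x) (sv y z) = sv (pd x y + sv x y) (gamma z) /\
       sv (pd x y + sv x y) (gamma z) = sv (pv x y + sd x y) (gamma z) /\
       pd (pv x y) (gamma z) = pv (gamma x) (pd y z + sd y z) /\
       pd (sv x y) (gamma z) = sv (gamma x) (pd y z) /\
       sv (gamma x) (sd y z) = sd (pv x y + sv x y) (gamma z) /\
       pd (pd x y) (gamma z) = pd (gamma x) (pv y z + sv y z) /\
       pd (gamma x) (pv y z + sv y z) = pd (gamma x) (pd y z + sd y z) /\
       pd (pd x y) (gamma z) = pd (gamma x) (pv y z + sd y z) /\
       pd (gamma x) (pv y z + sd y z) = pd (gamma x) (pd y z + sv y z) /\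
       pd (sd x y) (gamma z) = sd (gamma x) (pv y z) /\
       sd (gamma x) (pv y z) = sd (gamma x) (pd y z) /\
       sd (gamma x) (sv y z) = sd (gamma x) (sd y z) /\
       sd (gamma x) (sd y z) = sd (pd x y + sd x y) (gamma z))].

Definition hs_prec_vdash (K : fieldType) (D V : lmodType K)
  (prec : D -> D -> D) (precl : D -> V -> V) (p q : D * V) : D * V :=
  (prec p.1 q.1, precl p.1 q.2).
Definition hs_prec_dashv (K : fieldType) (D V : lmodType K)
  (prec : D -> D -> D) (precr : V -> D -> V) (p q : D * V) : D * V :=
  (prec p.1 q.1, precr p.2 q.1).
Definition hs_succ_vdash (K : fieldType) (D V : lmodType K)
  (succ : D -> D -> D) (succl : D -> V -> V) (p q : D * V) : D * V :=
  (succ p.1 q.1, succl p.1 q.2).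
Definition hs_succ_dashv (K : fieldType) (D V : lmodType K)
  (succ : D -> D -> D) (succr : V -> D -> V) (p q : D * V) : D * V :=
  (succ p.1 q.1, succr p.2 q.1).
Definition hs_twist (K : fieldType) (D V : lmodType K)
  (alpha : D -> D) (beta : V -> V) (p : D * V) : D * V :=
  (alpha p.1, beta p.2).

From HB Require Import structures.
From mathcomp Require Import all_boot all_order all_algebra.

(* On the D-component the two
   operations prec_vdash and prec_dashv (resp. succ_vdash and succ_dashv)
   both reduce to prec (resp. succ), so every quadri-dendriform identity
   becomes one of the three Hom-dendriform identities; on the V-component it
   becomes one of the nine representation identities. *)

Section HemiSemidirectLinearity.

Variables (K : fieldType) (D V : lmodType K).

Lemma bilinear_pair_left (op : D -> D -> D) (act : D -> V -> V) :
  is_bilinear op -> is_bilinear act ->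
  is_bilinear (fun p q : D * V => (op p.1 q.1, act p.1 q.2)).
Proof.
move=> [opl opr] [actl actr].
by split=> [q|p] a [x u] [y v]; congr pair; rewrite /= ?opl ?opr ?actl ?actr.
Qed.

Lemma bilinear_pair_right (op : D -> D -> D) (act : V -> D -> V) :
  is_bilinear op -> is_bilinear act ->
  is_bilinear (fun p q : D * V => (op p.1 q.1, act p.2 q.1)).
Proof.
move=> [opl opr] [actl actr].
by split=> [q|p] a [x u] [y v]; congr pair; rewrite /= ?opl ?opr ?actl ?actr.
Qed.

Lemma linear_hs_twist (alpha : D -> D) (beta : V -> V) :
  is_linear alpha -> is_linear beta -> is_linear (hs_twist alpha beta).
Proof. by move=> alphaL betaL a [x u] [y v]; rewrite /hs_twist /= alphaL betaL. Qed.

End HemiSemidirectLinearity.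

Theorem proposition3p7 (K : fieldType) (charK0 : [pchar K]%R =i pred0)
  (D V : lmodType K)
  (prec succ : D -> D -> D) (alpha : D -> D)
  (precl succl : D -> V -> V) (precr succr : V -> D -> V) (beta : V -> V) :
  HomDendriform prec succ alpha ->
  HomDendriformRep prec succ alpha precl succl precr succr beta ->
  HomQuadriDendriform
    (hs_prec_vdash prec precl) (hs_prec_dashv prec precr)
    (hs_succ_vdash succ succl) (hs_succ_dashv succ succr)
    (hs_twist alpha beta).
Proof.
move=> [precB succB alphaL dend] [betaL [preclB succlB] [precrB succrB] rep].
split; [split|split| |].
- exact: bilinear_pair_left.
- exact: bilinear_pair_right.
- exact: bilinear_pair_left.
- exact: bilinear_pair_right.
- exact: linear_hs_twist.
move=> [x u] [y v] [z w].
have [d1 d2 d3] := dend x y z.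
have [l1 [l2 [l3 _]]] := rep x y w.
have [_ [_ [_ [r1 [r2 [r3 _]]]]]] := rep y z u.
have [_ [_ [_ [_ [_ [_ [b1 [b2 b3]]]]]]]] := rep x z v.
rewrite /hs_prec_vdash /hs_prec_dashv /hs_succ_vdash /hs_succ_dashv /hs_twist /=.
by do 18 (split; first by congr pair); congr pair.
Qed.
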